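(* Every extended ADE curve $C$ is numerically $2$-connected: for every decomposition $C=A+B$ into nonzero effective divisors $A,B$ one has $A\cdot B\ge2$.
   Context: Work over $\mathbb C$. Let $X$ be a smooth projective surface and $C=\sum_{v\in V}m_vC_v\subset X$ an effective divisor with smooth irreducible components $C_v$, at most two through any point, meeting transversally (for $x\in C_v\cap C_w$, $(m_vC_v)\cap(m_wC_w)$ has local ring $\mathbb C[u,t]/(u^{m_v},t^{m_w})$). The labelled intersection graph $\Gamma$ has vertex set $V$, one edge per intersection point, label $m_v$. $C$ is an \emph{extended ADE curve} if (1) $\Gamma$ is one of: $\tilde A_n$: a cycle of $n+1$ vertices (two vertices, two edges if $n=1$), all labels $1$; $\tilde D_n$ ($n\ge4$): a chain of $n-3$ label-$2$ vertices with two label-$1$ vertices attached to each end (for $n=4$, one label-$2$ vertex with four label-$1$ neighbours); $\tilde E_6$: central label-$3$ vertex with three arms (label $2$ then $1$); $\tilde E_7$: chain $1,2,3,4,3,2,1$ plus a label-$2$ vertex on the label-$4$ vertex; $\tilde E_8$: chain $2,4,6,5,4,3,2,1$ plus a label-$3$ vertex on the label-$6$ vertex; (2) each $C_i$ with $m_i\ge2$ is a smooth rational $(-2)$-curve. *)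

From mathcomp Require Import all_boot all_order all_algebra.
Set Implicit Arguments. Unset Strict Implicit. Unset Printing Implicit Defensive.
Import Order.TTheory GRing.Theory Num.Theory.

Inductive ADEtype := At of nat | Dt of nat | Et6 | Et7 | Et8.

Definition std_valid (t : ADEtype) : bool :=
  match t with At n => 1 <= n | Dt n => 4 <= n | _ => true end.

Definition std_size (t : ADEtype) : nat :=
  match t with At n => n.+1 | Dt n => n.+1 | Et6 => 7 | Et7 => 8 | Et8 => 9 end.

Definition std_label (t : ADEtype) (i : nat) : nat :=
  match t with
  | At _ => 1
  | Dt n => if i <= n - 4 then 2 else 1
  | Et6 => nth 0 [:: 3; 2; 1; 2; 1; 2; 1] i
  | Et7 => nth 0 [:: 1; 2; 3; 4; 3; 2; 1; 2] i
  | Et8 => nth 0 [:: 2; 4; 6; 5; 4; 3; 2; 1; 3] i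
  end.

(* directed version of the edges *)
Definition std_arc (t : ADEtype) (i j : nat) : bool :=
  match t with
  | At n => j == (i + 1) %% n.+1
  | Dt n => [|| (j == i.+1) && (j <= n - 4),
                (i == 0) && ((j == n - 3) || (j == n - 2))
              | (i == n - 4) && ((j == n - 1) || (j == n))]
  | Et6 => (i, j) \in [:: (0,1); (1,2); (0,3); (3,4); (0,5); (5,6)]
  | Et7 => (i, j) \in [:: (0,1); (1,2); (2,3); (3,4); (4,5); (5,6); (3,7)]
  | Et8 => (i, j) \in [:: (0,1); (1,2); (2,3); (3,4); (4,5); (5,6); (6,7); (2,8)]
  end.

Definition std_edges (t : ADEtype) (i j : nat) : nat :=
  (std_arc t i j : nat) + (std_arc t j i : nat).

(* A curve C = sum_v m v C_v with components indexed by V and intersection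
   numbers I v w = C_v . C_w is an extended ADE curve: its labelled
   intersection graph is (isomorphic to) a standard one, and components of
   multiplicity >= 2 are (-2)-curves. *)
Definition is_extended_ADE (V : finType) (m : V -> nat) (I : V -> V -> int) : Prop :=
  (forall v w, I v w = I w v) /\
  exists t : ADEtype, std_valid t /\
  exists f : V -> 'I_(std_size t), bijective f /\
    (forall v, m v = std_label t (f v)) /\
    (forall v w, v != w -> I v w = Posz (std_edges t (f v) (f w))) /\
    (forall v, 2 <= m v -> I v v = (-2)%R).

Definition inter_num (V : finType) (I : V -> V -> int) (a b : V -> nat) : int :=
  (\sum_(v : V) \sum_(w : V) (Posz (a v * b w) * I v w))%R.

(* Write A = sum_v a_v C_v.  The labels m span the kernel of the extended
   Cartan matrix, i.e. C_v . C = 0 for every v, so A . B = A . (C - A) = - A^2.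
   Zariski's identity
     -2 A^2 = sum_(v,w) e_vw m_v m_w (a_v / m_v - a_w / m_w)^2
   gives A^2 <= 0, with equality only if a / m is constant along the edges,
   hence constant since the graph is connected; a component of multiplicity 1
   then forces A = 0 or A = C.  Finally A^2 is even, the diagonal of the
   intersection matrix being -2 where it matters, so A . B = - A^2 >= 2. *)

From mathcomp Require Import all_boot all_order all_algebra.
From mathcomp Require Import ring zify.
Import Order.TTheory GRing.Theory Num.Theory.

Set Implicit Arguments.
Unset Strict Implicit.
Unset Printing Implicit Defensive.

Local Open Scope ring_scope.

Lemma sum_sym_double (M : nmodType) (T : eqType) (r : seq T) (f : T -> T -> M) :
  (forall i j, f i j = f j i) -> (forall i, f i i = 0) ->
  exists k, \sum_(i <- r) \sum_(j <- r) f i j = k *+ 2.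
Proof.
move=> fC f0; elim: r => [|x r [k IH]]; first by exists 0; rewrite big_nil mul0rn.
exists (k + \sum_(j <- r) f x j).
have sumC i : \sum_(j <- x :: r) f i j = f x i + \sum_(j <- r) f i j.
  by rewrite big_cons fC.
rewrite big_cons (eq_bigr _ (fun i _ => sumC i)) sumC f0 add0r big_split /= IH.
by rewrite mulrnDl addrA -mulr2n addrC.
Qed.

Lemma exists_not_proportional (T : Type) (m a b : T -> nat) (z : T) :
  m z = 1%N -> (forall v, a v + b v = m v)%N ->
  (exists v, a v != 0%N) -> (exists v, b v != 0%N) ->
  exists v w, (a v * m w != a w * m v)%N.
Proof.
move=> mz ab [v av] [u bu].
have [az|az] : a z = 0%N \/ a z = 1%N by move: (ab z); rewrite mz; lia.
- by exists v, z; rewrite mz az muln1 mul0n.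
- exists z, u; rewrite mz az mul1n muln1; apply: contra bu => /eqP mu.
  by move: (ab u); rewrite -mu; lia.
Qed.

Section CartanForm.

Variables (V : finType) (e : V -> V -> nat) (m : V -> nat).

(* A . B for A = sum_v x_v C_v and B = sum_v y_v C_v, when C_v . C_w is the
   number e v w of edges for v != w and C_v^2 = -2. *)
Definition cartan_form (R : pzRingType) (x y : V -> nat) : R :=
  \sum_v \sum_w (x v * y w)%:R * ((e v w)%:R - (v == w)%:R *+ 2).

Lemma cartan_formE (R : pzRingType) x y :
  cartan_form R x y =
  \sum_v \sum_w (x v * y w * e v w)%:R - (\sum_v (x v * y v)%:R) *+ 2.
Proof.
rewrite -sumrMnl -sumrB; apply: eq_bigr => v _.
have delta : \sum_w (x v * y w)%:R *+ (v == w) = (x v * y v)%:R :> R.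
  by rewrite (bigD1 v) //= eqxx big1 ?addr0 // => w; rewrite eq_sym => /negPf ->.
rewrite -delta -sumrMnl -sumrB; apply: eq_bigr => w _.
by rewrite mulrBr -natrM mulrnAr mulr_natr.
Qed.

Lemma cartan_formDr (R : pzRingType) x y z s :
  (forall v, y v + z v = s v)%N ->
  cartan_form R x s = cartan_form R x y + cartan_form R x z.
Proof.
move=> yz; rewrite /cartan_form -big_split; apply: eq_bigr => v _.
rewrite -big_split; apply: eq_bigr => w _ /=.
by rewrite -yz mulnDr natrD mulrDl.
Qed.

Hypothesis e_sym : forall v w, e v w = e w v.
Hypothesis e_diag : forall v, e v v = 0%N.
Hypothesis m_gt0 : forall v, (0 < m v)%N.
Hypothesis m_null : forall v, (\sum_w e v w * m w = (m v).*2)%N. (* C_v . C = 0 *)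

Lemma cartan_form_null (R : pzRingType) x : cartan_form R x m = 0.
Proof.
rewrite cartan_formE -sumrMnl -sumrB big1 // => v _; rewrite -natr_sum.
have -> : (\sum_w x v * m w * e v w = (x v * m v) * 2)%N.
  rewrite muln2 doubleMr -m_null big_distrr.
  by apply: eq_bigr => w _ /=; rewrite mulnAC mulnA.
by rewrite natrM mulr_natr subrr.
Qed.

Lemma cartan_form_self_even x : exists k : int, cartan_form int x x = k *+ 2.
Proof.
have [||k kE] :=
  sum_sym_double (index_enum V) (f := fun v w => (x v * x w * e v w)%:R : int).
  by move=> v w; rewrite e_sym mulnAC mulnC mulnA.
  by move=> v; rewrite e_diag muln0.
by exists (k - \sum_v (x v * x v)%:R); rewrite cartan_formE kE mulrnBl.
Qed.

Lemma cartan_form_intr (R : pzRingType) x y :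
  (cartan_form int x y)%:~R = cartan_form R x y.
Proof.
rewrite rmorph_sum; apply: eq_bigr => v _; rewrite rmorph_sum; apply: eq_bigr => w _.
by rewrite rmorphM rmorphB !rmorph_nat rmorphMn rmorph_nat.
Qed.

Lemma cartan_form_self_sqr (R : numFieldType) x :
  cartan_form R x x *+ 2 =
  - \sum_v \sum_w (e v w * (m v * m w))%:R *
      ((x v)%:R / (m v)%:R - (x w)%:R / (m w)%:R) ^+ 2.
Proof.
pose r v := (x v)%:R / (m v)%:R : R.
have xE v : (x v)%:R = r v * (m v)%:R by rewrite divfK // pnatr_eq0 -lt0n.
pose G v w := (e v w * m w)%:R * (r v ^+ 2 * (m v)%:R) : R.
have termE v w : (e v w * (m v * m w))%:R * (r v - r w) ^+ 2 =
                 G v w + G w v - (x v * x w * e v w)%:R *+ 2.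
  by rewrite /G (e_sym w v) !natrM !xE; ring.
have sumG : \sum_v \sum_w G v w = (\sum_v (x v * x v)%:R) *+ 2.
  rewrite -sumrMnl; apply: eq_bigr => v _.
  by rewrite -mulr_suml -natr_sum m_null -mul2n !natrM !xE; ring.
rewrite (eq_bigr (fun v => \sum_w G v w + \sum_w G w v -
                           (\sum_w (x v * x w * e v w)%:R) *+ 2)); last first.
  by move=> v _; rewrite -sumrMnl -big_split -sumrB; apply: eq_bigr => w _; apply: termE.
rewrite sumrB big_split sumrMnl /= [\sum_v \sum_w G w v]exchange_big /= sumG cartan_formE.
ring.
Qed.

Lemma cartan_form_self_le0 (R : realFieldType) x : cartan_form R x x <= 0.
Proof.
rewrite -(pmulrn_lle0 _ (isT : (0 < 2)%N)) cartan_form_self_sqr oppr_le0.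
by apply: sumr_ge0 => v _; apply: sumr_ge0 => w _; rewrite mulr_ge0 ?sqr_ge0.
Qed.

Lemma cartan_form_self_eq0 (R : realFieldType) x :
  cartan_form R x x = 0 ->
  forall v w, (0 < e v w)%N -> (x v)%:R / (m v)%:R = (x w)%:R / (m w)%:R :> R.
Proof.
move=> /(congr1 (fun z => z *+ 2)); rewrite cartan_form_self_sqr mul0rn => /eqP.
have term_ge0 v w : 0 <= (e v w * (m v * m w))%:R *
    ((x v)%:R / (m v)%:R - (x w)%:R / (m w)%:R) ^+ 2 :> R by rewrite mulr_ge0 ?sqr_ge0.
have row_ge0 v : 0 <= \sum_w (e v w * (m v * m w))%:R *
    ((x v)%:R / (m v)%:R - (x w)%:R / (m w)%:R) ^+ 2 :> R.
  by apply: sumr_ge0 => w _; apply: term_ge0.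
rewrite oppr_eq0 => /eqP /(psumr_eq0P (fun v _ => row_ge0 v)) row0 v w evw.
have /eqP := psumr_eq0P (fun w _ => term_ge0 v w) (row0 v isT) (i := w) isT.
by rewrite mulf_eq0 pnatr_eq0 !muln_eq0 !eqn0Ngt evw !m_gt0 /= sqrf_eq0 subr_eq0 => /eqP.
Qed.

Lemma cartan_form_self_lt0 x :
  (forall v w, connect [rel v w | 0 < e v w]%N v w) ->
  (exists v w, x v * m w != x w * m v)%N ->
  cartan_form int x x < 0.
Proof.
move=> connected [v0 [w0 not_prop]].
rewrite -(ltrz0 rat) cartan_form_intr lt_neqAle cartan_form_self_le0 andbT.
apply: contra not_prop => /eqP /cartan_form_self_eq0 ratio_edge.
pose ratio v := (x v)%:R / (m v)%:R : rat.
have ratio_closed : closed [rel v w | 0 < e v w]%N [pred v | ratio v == ratio w0].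
  by move=> v w /ratio_edge vw; rewrite !inE /ratio vw.
have := closed_connect ratio_closed (connected v0 w0); rewrite !inE eqxx.
by rewrite eqr_div ?pnatr_eq0 -?lt0n ?m_gt0 // -!natrM eqr_nat.
Qed.

Theorem cartan_form_ge2 a b :
  (forall v w, connect [rel v w | 0 < e v w]%N v w) ->
  (exists z, m z = 1%N) -> (forall v, a v + b v = m v)%N ->
  (exists v, a v != 0%N) -> (exists v, b v != 0%N) ->
  2 <= cartan_form int a b.
Proof.
move=> connected [z mz] ab a_nz b_nz.
have := cartan_form_self_lt0 connected (exists_not_proportional mz ab a_nz b_nz).
have := cartan_formDr int a ab; rewrite cartan_form_null.
have [k ->] := cartan_form_self_even a.
rewrite mulr2n; lia.
Qed.

End CartanForm.

Lemma inter_num_cartan (V : finType) (I : V -> V -> int) (e : V -> V -> nat)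
    (a b : V -> nat) :
  (forall v w, v != w -> I v w = (e v w)%:Z) -> (forall v, e v v = 0%N) ->
  (forall v, I v v = -2 \/ (a v * b v = 0)%N) ->
  inter_num I a b = cartan_form e int a b.
Proof.
move=> I_off e_diag I_diag; apply: eq_bigr => v _; apply: eq_bigr => w _.
have [<-|ne_vw] := eqVneq v w.
  by rewrite e_diag sub0r natz; case: (I_diag v) => ->; rewrite ?mul0r.
by rewrite I_off // subr0 !natz.
Qed.

Local Close Scope ring_scope.

(* Neighbours are listed with multiplicity: the two edges of A~1 give [:: 1; 1]. *)
Definition std_nbrs (t : ADEtype) (i : nat) : seq nat :=
  match t with
  | At n => [:: if i == n then 0 else i.+1; if i == 0 then n else i.-1]
  | Dt n => if i == 0 then (if n == 4 then [:: 1; 2; 3; 4] else [:: 1; n - 3; n - 2])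
            else if i < n - 4 then [:: i.-1; i.+1]
            else if i == n - 4 then [:: n - 5; n - 1; n]
            else if i <= n - 2 then [:: 0] else [:: n - 4]
  | Et6 => nth [::] [:: [:: 1; 3; 5]; [:: 0; 2]; [:: 1]; [:: 0; 4]; [:: 3]; [:: 0; 6];
                        [:: 5]] i
  | Et7 => nth [::] [:: [:: 1]; [:: 0; 2]; [:: 1; 3]; [:: 2; 4; 7]; [:: 3; 5]; [:: 4; 6];
                        [:: 5]; [:: 3]] i
  | Et8 => nth [::] [:: [:: 1]; [:: 0; 2]; [:: 1; 3; 8]; [:: 2; 4]; [:: 3; 5]; [:: 4; 6];
                        [:: 5; 7]; [:: 6]; [:: 2]] i
  end.

Lemma forall_ltn_iota (P : pred nat) N : all P (iota 0 N) -> forall i, i < N -> P i.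
Proof. by move=> /allP P_iota i lt_iN; apply: P_iota; rewrite mem_iota. Qed.

Lemma addn1_modS n i : i <= n -> (i + 1) %% n.+1 = if i == n then 0 else i.+1.
Proof.
move=> le_in; case: eqP => [->|ne_in]; first by rewrite addn1 modnn.
by rewrite modn_small; lia.
Qed.

Ltac case_lia :=
  repeat (simpl; match goal with
  | |- _ /\ _ => split
  | |- context [if _ then _ else _] => case: ifP => ?; try (exfalso; lia)
  | |- context [?x == ?y] => case: (x =P y) => ?; try (exfalso; lia)
  | |- context [?x <= ?y] => case: (leqP x y) => ?; try (exfalso; lia)
  end); simpl; lia.

Lemma std_label_gt0 t i : std_valid t -> i < std_size t -> 0 < std_label t i.
Proof.
case: t => [n|n| | |] /= t_valid lt_iN; try case_lia.
all: by move: i lt_iN; apply: forall_ltn_iota.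
Qed.

Lemma std_edges_diag t i : std_valid t -> i < std_size t -> std_edges t i i = 0.
Proof.
rewrite /std_edges; case: t => [n|n| | |] /= t_valid lt_iN.
- rewrite addn1_modS; case_lia.
- case_lia.
all: by apply/eqP; move: i lt_iN; apply: forall_ltn_iota.
Qed.

Lemma std_edges_nbrs t i j : std_valid t -> i < std_size t -> j < std_size t ->
  std_edges t i j = count_mem j (std_nbrs t i).
Proof.
rewrite /std_edges; case: t => [n|n| | |] /= t_valid lt_iN lt_jN.
- rewrite !addn1_modS; case_lia.
- case_lia.
all: apply/eqP; move: j lt_jN; apply: forall_ltn_iota.
all: by move: i lt_iN; apply: forall_ltn_iota.
Qed.

Lemma std_nbrs_ltn t i : std_valid t -> i < std_size t ->
  all (fun k => k < std_size t) (std_nbrs t i).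
Proof.
case: t => [n|n| | |] /= t_valid lt_iN; try case_lia.
all: by move: i lt_iN; apply: forall_ltn_iota.
Qed.

Lemma std_nbrs_label t i : std_valid t -> i < std_size t ->
  sumn (map (std_label t) (std_nbrs t i)) = (std_label t i).*2.
Proof.
case: t => [n|n| | |] /= t_valid lt_iN; try case_lia.
all: by apply/eqP; move: i lt_iN; apply: forall_ltn_iota.
Qed.

Lemma std_nbrs_has_ltn t i : std_valid t -> 0 < i < std_size t ->
  has (fun k => k < i) (std_nbrs t i).
Proof.
case: t => [n|n| | |] /= t_valid /andP[i_gt0 lt_iN]; try case_lia.
all: by move: i_gt0; apply/implyP; move: i lt_iN; apply: forall_ltn_iota.
Qed.

Lemma std_label_one t : std_valid t -> exists2 z, z < std_size t & std_label t z = 1.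
Proof.
case: t => [n|n| | |] /= t_valid; [by exists 0 | | by exists 2 | by exists 0 | by exists 7].
by exists n => //; case_lia.
Qed.

Lemma sum_count_mem_ord N (s : seq nat) (g : nat -> nat) :
  all (fun k => k < N) s -> \sum_(j < N) count_mem (j : nat) s * g j = sumn (map g s).
Proof.
elim: s => [|k s IH] /=; first by rewrite big1.
case/andP=> lt_kN /IH <-.
rewrite (eq_bigr (fun j : 'I_N => (k == j) * g j + count_mem (j : nat) s * g j)); last first.
  by move=> j _; rewrite mulnDl.
rewrite big_split /=; congr (_ + _).
rewrite (bigD1 (Ordinal lt_kN)) //= eqxx mul1n big1 ?addn0 // => j.
by rewrite -val_eqE /= eq_sym => /negPf ->.
Qed.

Section StdCurve.

Variables (t : ADEtype) (V : finType) (f : V -> 'I_(std_size t)).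
Hypotheses (t_valid : std_valid t) (f_bij : bijective f).

Lemma std_curve_null v :
  \sum_w std_edges t (f v) (f w) * std_label t (f w) = (std_label t (f v)).*2.
Proof.
rewrite -(std_nbrs_label t_valid (ltn_ord (f v))).
rewrite -(sum_count_mem_ord _ (std_nbrs_ltn t_valid (ltn_ord (f v)))).
rewrite (reindex f) /=; last exact: onW_bij.
by apply: eq_bigr => w _; rewrite std_edges_nbrs.
Qed.

Lemma std_curve_connected v w : connect [rel v w | 0 < std_edges t (f v) (f w)] v w.
Proof.
have [g fK gK] := f_bij.
have N_gt0 : 0 < std_size t by apply: leq_ltn_trans (ltn_ord (f v)).
pose root := g (Ordinal N_gt0).
suff to_root u : connect [rel v w | 0 < std_edges t (f v) (f w)] u root.
  apply: connect_trans (to_root v) _; rewrite sym_connect_sym ?to_root //.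
  by move=> x y /=; rewrite /std_edges addnC.
elim/ltn_ind: {u}(val (f u)) {-2}u (erefl (val (f u))) => k IH u fu.
have [k0|k_gt0] := posnP k.
  suff -> : u = root by apply: connect0.
  by rewrite -(fK u); congr g; apply: val_inj; rewrite /= fu k0.
have /hasP[j j_nbr lt_jk] : has (fun j => j < k) (std_nbrs t k).
  by apply: std_nbrs_has_ltn; rewrite // k_gt0 -fu ltn_ord.
have lt_jN : j < std_size t by apply: ltn_trans lt_jk _; rewrite -fu ltn_ord.
apply: (connect_trans (y := g (Ordinal lt_jN))); last by apply: (IH j lt_jk); rewrite gK.
by apply: connect1; rewrite /= gK std_edges_nbrs ?ltn_ord // fu -has_count has_pred1.
Qed.

Lemma std_curve_label_one : exists z, std_label t (f z) = 1.
Proof.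
have [z lt_zN label_z] := std_label_one t_valid; have [g _ gK] := f_bij.
by exists (g (Ordinal lt_zN)); rewrite gK.
Qed.

End StdCurve.

Theorem lemma3p6 (V : finType) (m : V -> nat) (I : V -> V -> int) :
  is_extended_ADE m I ->
  forall a b : V -> nat,
    (forall v, a v + b v = m v) ->
    (exists v, a v != 0) ->
    (exists v, b v != 0) ->
    (2 <= inter_num I a b)%R.
Proof.
move=> [_ [t [t_valid [f [f_bij [m_label [I_off I_diag]]]]]]] a b ab a_nz b_nz.
have e_diag v : std_edges t (f v) (f v) = 0 := std_edges_diag t_valid (ltn_ord (f v)).
rewrite (inter_num_cartan (e := fun v w => std_edges t (f v) (f w))) //; last first.
  (* C_v^2 is unknown when m v = 1, but then a v or b v vanishes. *)
  move=> v; have [/I_diag|lt_m2] := leqP 2 (m v); [by left | right].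
  by move: (ab v) lt_m2; nia.
apply: (cartan_form_ge2 (m := m)) => //.
- by move=> v w; rewrite /std_edges addnC.
- by move=> v; rewrite m_label std_label_gt0.
- by move=> v; under eq_bigr do rewrite m_label; rewrite m_label std_curve_null.
- exact: std_curve_connected.
- by have [z] := std_curve_label_one t_valid f_bij; exists z; rewrite m_label.
Qed.
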